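(* For every $k\ge1$, the transfinite lower central subgroup $(\Gamma_{2k-1})_\omega$ equals the cyclic subgroup of order $(2k-1)^2$ generated by $[x,y]$, and $(\Gamma_{2k-1})_{\omega+1}$ is trivial. Consequently, for $\widehat\Gamma=\varinjlim_k\Gamma_{2k-1}$, $\widehat\Gamma_\omega$ is the central subgroup $\mathbb{Z}_{(2)}/\mathbb{Z}$ and $\widehat\Gamma_{\omega+1}$ is trivial.
   Context: $\Gamma_{2k-1}=\langle x,y,t\mid [x,y]^{(2k-1)^2},\ [[x,y],t],\ [[x,y],x],\ [[x,y],y],\ txt^{-1}=x^{-1},\ tyt^{-1}=y^{-1}\rangle$. For $(2k-1)\mid(2\ell-1)$, $\Gamma_{2k-1}\to\Gamma_{2\ell-1}$ is $t\mapsto t$, $x\mapsto x^{(2\ell-1)/(2k-1)}$, $y\mapsto y^{(2\ell-1)/(2k-1)}$, and $\widehat\Gamma$ is the colimit (it is the homology localization of $\Gamma=\Gamma_1$). In $\Gamma_{2k-1}$, $[x,y]$ generates a central subgroup identified with $(\frac1{(2k-1)^2}\mathbb{Z})/\mathbb{Z}$ via $[x,y]\mapsto\frac{1}{(2k-1)^2}$; in the colimit these give a central subgroup identified with $\mathbb{Z}_{(2)}/\mathbb{Z}$, $\mathbb{Z}_{(2)}=\{a/b\in\mathbb{Q}:b\text{ odd}\}$. Lower central series: $\pi_1=\pi$, $\pi_{\alpha}=[\pi,\pi_{\alpha-1}]$ for successor ordinals, $\pi_\alpha=\bigcap_{\beta<\alpha}\pi_\beta$ for limit ordinals. *)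

From mathcomp Require Import all_boot all_order all_algebra.
Set Implicit Arguments. Unset Strict Implicit. Unset Printing Implicit Defensive.
Import Order.TTheory GRing.Theory Num.Theory.

Record group := Group {
  gcar :> Type;
  gmul : gcar -> gcar -> gcar;
  ginv : gcar -> gcar;
  gone : gcar;
  gmulA : forall a b c, gmul a (gmul b c) = gmul (gmul a b) c;
  gmul1 : forall a, gmul gone a = a;
  gmulV : forall a, gmul (ginv a) a = gone }.
Arguments gmul {g} _ _.
Arguments ginv {g} _.
Arguments gone {g}.

Section Ops.
Variable G : group.

Fixpoint gpown (a : G) (n : nat) : G :=
  match n with O => gone | S m => gmul a (gpown a m) end.
Definition gpowz (a : G) (j : int) : G :=
  match j with Posz n => gpown a n | Negz n => ginv (gpown a n.+1) end.

Definition comm (a b : G) : G := gmul a (gmul b (gmul (ginv a) (ginv b))).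

Definition is_subgroup (H : G -> Prop) : Prop :=
  H gone /\ (forall a b, H a -> H b -> H (gmul a b)) /\ (forall a, H a -> H (ginv a)).

Definition gen (S : G -> Prop) : G -> Prop :=
  fun g => forall H, is_subgroup H -> (forall s, S s -> H s) -> H g.

Definition commg (A B : G -> Prop) : G -> Prop :=
  gen (fun g => exists a b, A a /\ B b /\ g = comm a b).

(* lower central series: lcs 0 = pi_1 = G, lcs n = pi_{n+1} = [G, pi_n] *)
Fixpoint lcs (n : nat) : G -> Prop :=
  match n with
  | O => fun _ => True
  | S m => commg (fun _ => True) (lcs m)
  end.

Definition lcs_omega : G -> Prop := fun g => forall n, lcs n g.
Definition lcs_omega1 : G -> Prop := commg (fun _ => True) lcs_omega.
End Ops.

Definition is_hom (G K : group) (f : G -> K) : Prop :=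
  forall a b, f (gmul a b) = gmul (f a) (f b).

Definition gamma_rels (G : group) (n : nat) (x y t : G) : Prop :=
  let z := comm x y in
  gpown z (n ^ 2) = gone /\
  comm z t = gone /\
  comm z x = gone /\
  comm z y = gone /\
  gmul t (gmul x (ginv t)) = ginv x /\
  gmul t (gmul y (ginv t)) = ginv y.

(* G is presented by <x,y,t | relations of Gamma_n>, via the universal property:
   the relations hold, and for every group K and x',y',t' in K satisfying the
   relations there is a unique homomorphism G -> K sending x,y,t to x',y',t'. *)
Definition presents_gamma (G : group) (n : nat) (x y t : G) : Prop :=
  gamma_rels n x y t /\
  forall (K : group) (x' y' t' : K), gamma_rels n x' y' t' ->
    exists f : G -> K, [/\ is_hom f, f x = x', f y = y', f t = t' &
      forall f' : G -> K, is_hom f' -> f' x = x' -> f' y = y' -> f' t = t' ->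
        forall g, f' g = f g].

Definition is_colimit (Gam : nat -> group)
    (phi : forall m n, Gam m -> Gam n) (C : group) (iota : forall n, Gam n -> C) : Prop :=
  (forall n, odd n -> is_hom (iota n)) /\
  (forall m n, odd m -> odd n -> (m %| n)%N -> forall g, iota n (phi m n g) = iota m g) /\
  forall (K : group) (f : forall n, Gam n -> K),
    (forall n, odd n -> is_hom (f n)) ->
    (forall m n, odd m -> odd n -> (m %| n)%N -> forall g, f n (phi m n g) = f m g) ->
    exists h : C -> K, [/\ is_hom h,
      (forall n, odd n -> forall g, h (iota n g) = f n g) &
      forall h' : C -> K, is_hom h' ->
        (forall n, odd n -> forall g, h' (iota n g) = f n g) -> forall c, h' c = h c].

(* Z_(2)/Z represented by the rationals q with 0 <= q < 1 and odd denominator *)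
Definition in_Z2modZ (q : rat) : Prop :=
  (0 <= q)%R /\ (q < 1)%R /\ odd (absz (denq q)).

Definition fracQ (q : rat) : rat := (q - (Num.floor q)%:~R)%R.

Arguments lcs_omega G _ : clear implicits.
Arguments lcs_omega1 G _ : clear implicits.
Arguments lcs G n _ : clear implicits.

From Pilot Require Import Defs.
From mathcomp Require Import all_boot all_order all_algebra.
From mathcomp Require Import ring lra zify.
From Stdlib Require Import ProofIrrelevance ClassicalEpsilon.

(* Every element of Gamma_n (n odd, z = [x,y]) has a unique normal form
   x^a y^b z^c t^e with c taken mod n^2, as witnessed by a concrete model of
   Gamma_n on Z x Z x Z/n^2 x Z.  In the model, the elements of [Gamma, ..
   [Gamma, Gamma]] (m commutators) have e = 0 and a, b divisible by 2^m, while
   every power of z lies in all these terms because 2 is invertible mod n^2.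
   Hence Gamma_omega = <z>, which is central, so Gamma_{omega+1} = 1.
   For the colimit, every element of a finite term of the series already comes
   from the same term of some Gamma_n, and the compatible rational models
   x |-> (1/n,0,0,0) of the Gamma_n glue to a homomorphism from hat-Gamma to
   the model on Q x Q x Q/Z x Z.  The x- and y-coordinates a/n of an element
   of hat-Gamma_omega have a divisible by every power of 2, so vanish; thus it
   is a power of some z_n, and its Q/Z coordinate identifies hat-Gamma_omega
   with Z_(2)/Z. *)

Set Implicit Arguments. Unset Strict Implicit. Unset Printing Implicit Defensive.
Import Order.TTheory GRing.Theory Num.Theory.
Local Open Scope ring_scope.

Lemma int_ind_succ_pred (P : int -> Prop) : P 0 -> (forall i, P i -> P (i + 1)) ->
  (forall i, P i -> P (i - 1)) -> forall i, P i.
Proof.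
move=> P0 PS PP; case=> n.
  elim: n => [//|n IH]; have := PS _ IH.
  by have -> : (Posz n + 1 = Posz n.+1) by lia.
elim: n => [|n IH]; first by have := PP _ P0.
by have := PP _ IH; have -> : (Negz n - 1 = Negz n.+1) by lia.
Qed.

Section GroupTheory.
Variable G : group.
Implicit Types a b c : G.

Lemma gmulVr a : gmul a (ginv a) = gone.
Proof.
rewrite -[LHS]gmul1 -{1}(gmulV (ginv a)) -gmulA.
by rewrite (gmulA (ginv a) a) gmulV gmul1 gmulV.
Qed.

Lemma gmul1r a : gmul a gone = a.
Proof. by rewrite -(gmulV a) gmulA gmulVr gmul1. Qed.

Lemma gmulKl a b : gmul (ginv a) (gmul a b) = b.
Proof. by rewrite gmulA gmulV gmul1. Qed.

Lemma gmulKr a b : gmul a (gmul (ginv a) b) = b.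
Proof. by rewrite gmulA gmulVr gmul1. Qed.

Lemma gmulI a b c : gmul a b = gmul a c -> b = c.
Proof. by move=> h; rewrite -(gmulKl a b) h gmulKl. Qed.

Lemma ginv_uniq a b : gmul a b = gone -> ginv a = b.
Proof. by move=> h; apply: (@gmulI a); rewrite gmulVr h. Qed.

Lemma ginvK a : ginv (ginv a) = a.
Proof. by apply: ginv_uniq; rewrite gmulV. Qed.

Lemma ginvM a b : ginv (gmul a b) = gmul (ginv b) (ginv a).
Proof. by apply: ginv_uniq; rewrite -gmulA (gmulA b) gmulVr gmul1 gmulVr. Qed.

Lemma ginv1 : ginv (@gone G) = gone.
Proof. by apply: ginv_uniq; rewrite gmul1. Qed.

Lemma gcommV a b : gmul a b = gmul b a -> gmul (ginv a) b = gmul b (ginv a).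
Proof. by move=> h; apply: (@gmulI a); rewrite gmulKr gmulA h -gmulA gmulVr gmul1r. Qed.

Lemma comm1P a b : comm a b = gone <-> gmul a b = gmul b a.
Proof.
rewrite /comm; split=> h.
  have e : gmul (gmul a (gmul b (gmul (ginv a) (ginv b)))) (gmul b a) = gmul b a
    by rewrite h gmul1.
  by rewrite -e -!gmulA (gmulKl b) gmulV gmul1r.
by rewrite !gmulA h -(gmulA b) gmulVr gmul1r gmulVr.
Qed.

Lemma gpown_comm a n : gmul a (gpown a n) = gmul (gpown a n) a.
Proof.
elim: n => [|n IH]; first by rewrite /= gmul1 gmul1r.
by rewrite /= {1}IH !gmulA IH.
Qed.

Lemma gpowzS a (i : int) : gpowz a (i + 1) = gmul (gpowz a i) a.
Proof.
case: i => n.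
  have -> : (Posz n + 1 = Posz n.+1) by lia.
  exact: gpown_comm.
case: n => [|n].
  have -> : (Negz 0 + 1 = 0) by lia.
  by rewrite /= gmul1r gmulV.
have -> : (Negz n.+1 + 1 = Negz n) by lia.
change (ginv (gpown a n.+1) = gmul (ginv (gpown a n.+2)) a).
by rewrite [gpown a n.+2]/= ginvM -gmulA gmulV gmul1r.
Qed.

Lemma gpowzP a (i : int) : gpowz a (i - 1) = gmul (gpowz a i) (ginv a).
Proof. by rewrite -{2}(subrK 1 i) gpowzS -gmulA gmulVr gmul1r. Qed.

Lemma gpowz1 a : gpowz a 1 = a.
Proof. by rewrite /= gmul1r. Qed.

Lemma gpowzD a (i j : int) : gpowz a (i + j) = gmul (gpowz a i) (gpowz a j).
Proof.
elim/int_ind_succ_pred: j => [|j IH|j IH]; first by rewrite addr0 gmul1r.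
  by rewrite addrA !gpowzS IH gmulA.
by rewrite addrA !gpowzP IH gmulA.
Qed.

Lemma gpowzN a (i : int) : gpowz a (- i) = ginv (gpowz a i).
Proof. by symmetry; apply: ginv_uniq; rewrite -gpowzD subrr. Qed.

Lemma gpowzN1 a : gpowz a (-1) = ginv a.
Proof. by rewrite gpowzN gpowz1. Qed.

Lemma gpowzM a (i j : int) : gpowz a (i * j) = gpowz (gpowz a i) j.
Proof.
elim/int_ind_succ_pred: j => [|j IH|j IH]; first by rewrite mulr0.
  by rewrite mulrDr mulr1 gpowzS -IH gpowzD.
by rewrite mulrBr mulr1 gpowzP -IH gpowzD gpowzN.
Qed.

Lemma gpowz_comm a b (i : int) : gmul a b = gmul b a ->
  gmul (gpowz a i) b = gmul b (gpowz a i).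
Proof.
move=> h; elim/int_ind_succ_pred: i => [|i IH|i IH]; first by rewrite gmul1 gmul1r.
  by rewrite gpowzS -gmulA h gmulA IH gmulA.
by rewrite gpowzP -gmulA (gcommV h) gmulA IH gmulA.
Qed.

Lemma gpowz_comm2 a b (i j : int) : gmul a b = gmul b a ->
  gmul (gpowz a i) (gpowz b j) = gmul (gpowz b j) (gpowz a i).
Proof. by move=> h; apply: gpowz_comm; symmetry; apply: gpowz_comm. Qed.

Lemma gpowzMl a b (i : int) : gmul a b = gmul b a ->
  gpowz (gmul a b) i = gmul (gpowz a i) (gpowz b i).
Proof.
move=> h; elim/int_ind_succ_pred: i => [|i IH|i IH]; first by rewrite gmul1.
  rewrite !gpowzS IH -!gmulA; congr gmul.
  by rewrite gmulA (gpowz_comm _ (esym h)) -gmulA.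
rewrite !gpowzP IH ginvM -!gmulA; congr gmul.
have hV : gmul (ginv b) (ginv a) = gmul (ginv a) (ginv b) by rewrite -!ginvM h.
by rewrite hV gmulA (gpowz_comm _ (esym (gcommV h))) -gmulA.
Qed.

Lemma gpowz1g (i : int) : gpowz (@gone G) i = gone.
Proof.
elim/int_ind_succ_pred: i => [|i IH|i IH] //; first by rewrite gpowzS IH gmul1.
by rewrite gpowzP IH gmul1 ginv1.
Qed.

Lemma gpowz_modz a (N : nat) (u : int) :
  gpowz a N = gone -> gpowz a (u %% N)%Z = gpowz a u.
Proof.
move=> h; rewrite [in RHS](divz_eq u N) [in RHS]gpowzD mulrC gpowzM h.
by rewrite gpowz1g gmul1.
Qed.

End GroupTheory.

Section Homomorphisms.
Variables (G K : group) (f : G -> K).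
Hypothesis hf : is_hom f.

Lemma hom1 : f gone = gone.
Proof. by apply: (@gmulI _ (f gone)); rewrite -hf gmul1 gmul1r. Qed.

Lemma homV a : f (ginv a) = ginv (f a).
Proof. by symmetry; apply: ginv_uniq; rewrite -hf gmulVr hom1. Qed.

Lemma hom_gpowz a (i : int) : f (gpowz a i) = gpowz (f a) i.
Proof.
elim/int_ind_succ_pred: i => [|i IH|i IH]; first exact: hom1.
  by rewrite !gpowzS hf IH.
by rewrite !gpowzP hf IH homV.
Qed.

Lemma hom_comm a b : f (comm a b) = comm (f a) (f b).
Proof. by rewrite /comm !hf !homV. Qed.

End Homomorphisms.

Lemma hom_comp (G K L : group) (f : G -> K) (g : K -> L) :
  is_hom f -> is_hom g -> is_hom (fun x => g (f x)).
Proof. by move=> hf hg a b; rewrite hf hg. Qed.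

Section LowerCentralSeries.
Variable G : group.

Lemma is_subgroup1 : is_subgroup (fun g : G => g = gone).
Proof.
split=> //; split; first by move=> a b -> ->; rewrite gmul1.
by move=> a ->; rewrite ginv1.
Qed.

Lemma gen_subgroup (S : G -> Prop) : is_subgroup (gen S).
Proof.
split; first by move=> H [].
split; last by move=> a Ha H HH HS; case: (HH) => _ [_ HV]; apply: HV; apply: Ha.
by move=> a b Ha Hb H HH HS; case: (HH) => _ [HM _]; apply: HM; [apply: Ha | apply: Hb].
Qed.

Lemma gen_in (S : G -> Prop) s : S s -> gen S s.
Proof. by move=> Ss H _ HS; apply: HS. Qed.

Lemma commg_in (A B : G -> Prop) a b : A a -> B b -> Defs.commg A B (comm a b).
Proof. by move=> Aa Bb; apply: gen_in; exists a, b. Qed.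

Lemma lcs_subgroup m : is_subgroup (lcs G m).
Proof. by case: m => [|m]; [split | exact: gen_subgroup]. Qed.

Lemma lcsM m a b : lcs G m a -> lcs G m b -> lcs G m (gmul a b).
Proof. by case: (lcs_subgroup m) => _ [HM _]; apply: HM. Qed.

Lemma lcsV m a : lcs G m a -> lcs G m (ginv a).
Proof. by case: (lcs_subgroup m) => _ [_ HV]; apply: HV. Qed.

Lemma lcs_omega_central_trivial :
  (forall g h : G, lcs_omega G g -> gmul g h = gmul h g) ->
  forall g : G, lcs_omega1 G g <-> g = gone.
Proof.
move=> central g; split=> [lg|->]; last by case: (gen_subgroup
  (fun g0 : G => exists a b, True /\ lcs_omega G b /\ g0 = comm a b)).
apply: (lg _ is_subgroup1) => _ [a [b [_ [lb ->]]]].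
by apply/comm1P; symmetry; apply: central.
Qed.

End LowerCentralSeries.

Lemma subgroup_preim (G K : group) (f : G -> K) (H : K -> Prop) :
  is_hom f -> is_subgroup H -> is_subgroup (fun g => H (f g)).
Proof.
move=> hf [H1 [HM HV]]; split; first by rewrite hom1.
split; first by move=> a b Ha Hb; rewrite hf; apply: HM.
by move=> a Ha; rewrite homV //; apply: HV.
Qed.

Lemma hom_lcs (G K : group) (f : G -> K) m g :
  is_hom f -> lcs G m g -> lcs K m (f g).
Proof.
move=> hf; elim: m g => [//|m IH] g /= lg.
apply: (lg (fun g => lcs K m.+1 (f g))).
  exact: subgroup_preim hf (lcs_subgroup K m.+1).
by move=> _ [a [b [_ [lb ->]]]]; rewrite hom_comm //; apply: commg_in; last apply: IH.
Qed.

Lemma hom_lcs_omega (G K : group) (f : G -> K) g :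
  is_hom f -> lcs_omega G g -> lcs_omega K (f g).
Proof. by move=> hf lg m; apply: hom_lcs. Qed.

Definition signz (e : int) : int := (-1) ^ e.

Lemma signzD e f : signz (e + f) = signz e * signz f.
Proof. by rewrite /signz exprzDr // unitrN1. Qed.

Lemma signz1 : signz 1 = -1.
Proof. by rewrite /signz expr1z. Qed.

Lemma signzE e : signz e = 1 \/ signz e = -1.
Proof.
rewrite /signz; case: e => n.
  rewrite -exprnP -signr_odd; case: (odd n); [right|left]; by rewrite ?expr1 ?expr0.
rewrite NegzE -invr_expz -exprnP -signr_odd; case: (odd n.+1); [right|left];
  by rewrite ?expr1 ?expr0 ?invrN1 ?invr1.
Qed.

Lemma signzN e : signz (- e) = signz e.
Proof.
have h : signz e * signz (- e) = 1 by rewrite -signzD subrr.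
by case: (signzE e) h => ->; case: (signzE (- e)) => -> //; lia.
Qed.

Lemma signzS e : signz (e + 1) = - signz e.
Proof. by rewrite signzD signz1; lia. Qed.

Lemma signzP e : signz (e - 1) = - signz e.
Proof. by rewrite signzD signzN signz1; lia. Qed.

Section Conjugation.
Variable G : group.

Definition gconj (u w : G) : G := gmul u (gmul w (ginv u)).

Lemma gconj_hom u : is_hom (gconj u).
Proof.
move=> a b; rewrite /gconj !gmulA; congr gmul; congr gmul.
by rewrite -(gmulA _ (ginv u)) gmulV gmul1r.
Qed.

Lemma gconjM u v w : gconj (gmul u v) w = gconj u (gconj v w).
Proof. by rewrite /gconj ginvM !gmulA. Qed.

Lemma gconj1 w : gconj gone w = w.
Proof. by rewrite /gconj ginv1 gmul1 gmul1r. Qed.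

Lemma gconjK u w : gconj (ginv u) (gconj u w) = w.
Proof. by rewrite -gconjM gmulV gconj1. Qed.

Lemma gconj_mulE u w v : gconj u w = v -> gmul u w = gmul v u.
Proof. by move=> <-; rewrite /gconj -!gmulA gmulV gmul1r. Qed.

Lemma gconj_id u w : gmul u w = gmul w u -> gconj u w = w.
Proof. by move=> h; rewrite /gconj gmulA h -gmulA gmulVr gmul1r. Qed.

Lemma gconj_gpowz_inv u w (e a : int) : gconj u w = ginv w ->
  gconj (gpowz u e) (gpowz w a) = gpowz w (signz e * a).
Proof.
move=> h.
have h1 b : gconj u (gpowz w b) = gpowz w (- b).
  by rewrite (hom_gpowz (gconj_hom u)) h -gpowzN1 -gpowzM; congr gpowz; lia.
have h2 b : gconj (ginv u) (gpowz w b) = gpowz w (- b).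
  by rewrite -[in LHS](opprK b) -(h1 (- b)) gconjK.
elim/int_ind_succ_pred: e a => [|e IH|e IH] b; first by rewrite gconj1 mul1r.
  by rewrite gpowzS gconjM h1 IH signzS; congr gpowz; lia.
by rewrite gpowzP gconjM h2 IH signzP; congr gpowz; lia.
Qed.

Lemma gconj_gpowz_id u w (e a : int) : gmul u w = gmul w u ->
  gconj (gpowz u e) (gpowz w a) = gpowz w a.
Proof. by move=> h; apply: gconj_id; symmetry; exact: gpowz_comm2. Qed.

End Conjugation.

Section NormalForm.
Variables (G : group) (x y t : G).
Let z := comm x y.
Hypotheses (zx : gmul z x = gmul x z) (zy : gmul z y = gmul y z)
  (zt : gmul z t = gmul t z) (tx : gconj t x = ginv x) (ty : gconj t y = ginv y).

Definition nform (a b c e : int) : G :=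
  gmul (gpowz x a) (gmul (gpowz y b) (gmul (gpowz z c) (gpowz t e))).

Lemma nform_z (c : int) : nform 0 0 c 0 = gpowz z c.
Proof. by rewrite /nform /= !gmul1 gmul1r. Qed.

Lemma nform_modz a b c e (N : nat) :
  gpowz z N = gone -> nform a b (c %% N)%Z e = nform a b c e.
Proof. by move=> zN; rewrite /nform gpowz_modz. Qed.

Lemma gconj_yx : gconj y x = gmul (ginv z) x.
Proof. by rewrite /z /comm !ginvM !ginvK /gconj -gmulA gmulV gmul1r !gmulA. Qed.

Lemma gconj_gpowz_yx (b a : int) :
  gconj (gpowz y b) (gpowz x a) = gmul (gpowz z (- (b * a))) (gpowz x a).
Proof.
have zVx : gmul (ginv z) x = gmul x (ginv z) by rewrite (gcommV zx).
have h1 c : gconj y (gpowz x c) = gmul (gpowz z (- c)) (gpowz x c).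
  rewrite (hom_gpowz (gconj_hom y)) gconj_yx gpowzMl // -gpowzN1 -gpowzM.
  by congr (gmul (gpowz _ _) _); lia.
have h2 c : gconj (ginv y) (gpowz x c) = gmul (gpowz z c) (gpowz x c).
  apply: (@gmulI _ (gpowz z (- c))).
  have e : gconj (ginv y) (gpowz z (- c)) = gpowz z (- c).
    by rewrite -gpowzN1; apply: gconj_gpowz_id.
  rewrite -{1}e -(gconj_hom (ginv y)) -h1 gconjK gmulA -gpowzD.
  by rewrite [(- c + c)%R]addrC subrr gmul1.
elim/int_ind_succ_pred: b => [|b IH|b IH]; first by rewrite gconj1 mul0r oppr0 gmul1.
  rewrite gpowzS gconjM h1 gconj_hom IH (gconj_gpowz_id _ _ (esym zy)) gmulA -gpowzD.
  by congr (gmul (gpowz _ _) _); lia.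
rewrite gpowzP gconjM h2 gconj_hom IH (gconj_gpowz_id _ _ (esym zy)) gmulA -gpowzD.
by congr (gmul (gpowz _ _) _); lia.
Qed.

Lemma swap_tx p (e a : int) : gmul (gmul p (gpowz t e)) (gpowz x a) =
  gmul (gmul p (gpowz x (signz e * a))) (gpowz t e).
Proof. by rewrite -!gmulA (gconj_mulE (gconj_gpowz_inv e a tx)). Qed.

Lemma swap_ty p (e a : int) : gmul (gmul p (gpowz t e)) (gpowz y a) =
  gmul (gmul p (gpowz y (signz e * a))) (gpowz t e).
Proof. by rewrite -!gmulA (gconj_mulE (gconj_gpowz_inv e a ty)). Qed.

Lemma swap_tz p (e c : int) : gmul (gmul p (gpowz t e)) (gpowz z c) =
  gmul (gmul p (gpowz z c)) (gpowz t e).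
Proof. by rewrite -!gmulA (gpowz_comm2 _ _ (esym zt)). Qed.

Lemma swap_zx p (c a : int) : gmul (gmul p (gpowz z c)) (gpowz x a) =
  gmul (gmul p (gpowz x a)) (gpowz z c).
Proof. by rewrite -!gmulA (gpowz_comm2 _ _ zx). Qed.

Lemma swap_zy p (c a : int) : gmul (gmul p (gpowz z c)) (gpowz y a) =
  gmul (gmul p (gpowz y a)) (gpowz z c).
Proof. by rewrite -!gmulA (gpowz_comm2 _ _ zy). Qed.

Lemma swap_yx p (b a : int) : gmul (gmul p (gpowz y b)) (gpowz x a) =
  gmul (gmul (gmul p (gpowz x a)) (gpowz y b)) (gpowz z (- (b * a))).
Proof.
rewrite -!gmulA (gconj_mulE (gconj_gpowz_yx b a)) -gmulA; congr gmul.
rewrite gmulA (gpowz_comm2 _ _ zx) -gmulA; congr gmul.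
by rewrite (gpowz_comm2 _ _ zy).
Qed.

Lemma merge_gpowz p (w : G) (i j : int) :
  gmul (gmul p (gpowz w i)) (gpowz w j) = gmul p (gpowz w (i + j)).
Proof. by rewrite gpowzD gmulA. Qed.

Lemma nform_mul a b c e a' b' c' e' :
  gmul (nform a b c e) (nform a' b' c' e') =
  nform (a + signz e * a') (b + signz e * b') (c + c' - b * (signz e * a')) (e + e').
Proof.
rewrite /nform !gmulA swap_tx swap_ty swap_tz merge_gpowz swap_zx swap_yx -gpowzD.
rewrite merge_gpowz swap_zy !merge_gpowz.
by congr (gmul (gmul _ (gpowz _ _)) _); lia.
Qed.

End NormalForm.

(* The model of Gamma on R x R x R/PZ x Z: (a, b, c, e) stands for the normal
   form x^a y^b z^c t^e, so the product is read off nform_mul.  The map red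
   picks the representative of a class of R mod PZ. *)
Section Model.
Variables (R : comNzRingType) (P : R) (red : R -> R).
Hypothesis redD : forall u (k : int), red (u + k%:~R * P) = red u.
Hypothesis redE : forall u, exists k : int, red u = u + k%:~R * P.

Lemma red_id u : red (red u) = red u.
Proof. by case: (redE u) => k E; rewrite {1}E redD. Qed.

Lemma red_congr u v : (exists k : int, v = u + k%:~R * P) -> red v = red u.
Proof. by case=> k ->; rewrite redD. Qed.

Record melt := MElt { xco : R; yco : R; zco : R; tco : int; zcoP : red zco = zco }.

Lemma melt_ext p q :
  xco p = xco q -> yco p = yco q -> zco p = zco q -> tco p = tco q -> p = q.
Proof.
case: p => a b c e h; case: q => a' b' c' e' h' /= -> -> ec ->.
by move: h; rewrite ec => h; congr MElt; apply: proof_irrelevance.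
Qed.

Definition mk a b c e := @MElt a b (red c) e (red_id c).

Definition rsign (e : int) : R := (signz e)%:~R.

Lemma rsignD e f : rsign (e + f) = rsign e * rsign f.
Proof. by rewrite /rsign signzD intrM. Qed.

Lemma rsignN e : rsign (- e) = rsign e.
Proof. by rewrite /rsign signzN. Qed.

Lemma rsignE e : rsign e = 1 \/ rsign e = -1.
Proof. by rewrite /rsign; case: (signzE e) => ->; [left | right]. Qed.

Lemma rsign0 : rsign 0 = 1.
Proof. by []. Qed.

Lemma rsign1 : rsign 1 = -1.
Proof. by rewrite /rsign signz1. Qed.

Definition mmul p q :=
  mk (xco p + rsign (tco p) * xco q) (yco p + rsign (tco p) * yco q)
     (zco p + zco q - yco p * (rsign (tco p) * xco q)) (tco p + tco q).
Definition minv p :=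
  mk (- (rsign (tco p) * xco p)) (- (rsign (tco p) * yco p))
     (- (xco p * yco p) - zco p) (- tco p).
Definition mone := mk 0 0 0 0.

Lemma red_addl u v w : red (red u + v - w) = red (u + v - w).
Proof. by case: (redE u) => k ->; apply: red_congr; exists k; ring. Qed.

Lemma red_addr u v w : red (v + red u - w) = red (v + u - w).
Proof. by case: (redE u) => k ->; apply: red_congr; exists k; ring. Qed.

Lemma red_subr u v : red (v - red u) = red (v - u).
Proof. by case: (redE u) => k ->; apply: red_congr; exists (- k); rewrite intrN; ring. Qed.

Lemma mmulA p q r : mmul p (mmul q r) = mmul (mmul p q) r.
Proof.
apply: melt_ext => /=; rewrite ?rsignD; try ring.
by rewrite red_addl red_addr; congr red; case: (rsignE (tco p)) => ->; ring.
Qed.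

Lemma mmul1 p : mmul mone p = p.
Proof.
apply: melt_ext => /=; rewrite ?rsign0; try ring.
by rewrite red_addl -[RHS](zcoP p); congr red; ring.
Qed.

Lemma mmulV p : mmul (minv p) p = mone.
Proof.
apply: melt_ext => /=; rewrite ?rsignN.
- by case: (rsignE (tco p)) => ->; ring.
- by case: (rsignE (tco p)) => ->; ring.
- by rewrite red_addl; congr red; case: (rsignE (tco p)) => ->; ring.
- by rewrite addNr.
Qed.

Definition model := @Defs.Group melt mmul minv mone mmulA mmul1 mmulV.

Lemma mk_red a b c e : mk a b (red c) e = mk a b c e.
Proof. by apply: melt_ext => //=; rewrite red_id. Qed.

Lemma mk_shift a b c e (k : int) : mk a b (c + k%:~R * P) e = mk a b c e.
Proof. by apply: melt_ext => //=; rewrite redD. Qed.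

Lemma mk_mul a b c e a' b' c' e' : @gmul model (mk a b c e) (mk a' b' c' e') =
  mk (a + rsign e * a') (b + rsign e * b') (c + c' - b * (rsign e * a')) (e + e').
Proof. by apply: melt_ext => //=; rewrite red_addl red_addr. Qed.

Lemma mk_inv a b c e : @ginv model (mk a b c e) =
  mk (- (rsign e * a)) (- (rsign e * b)) (- (a * b) - c) (- e).
Proof. by apply: melt_ext => //=; rewrite red_subr. Qed.

Lemma mk_coords p : p = mk (xco p) (yco p) (zco p) (tco p).
Proof. by apply: melt_ext => //=; rewrite zcoP. Qed.

Lemma gpowz_mk0 a b c (i : int) : a = 0 \/ b = 0 ->
  @gpowz model (mk a b c 0) i = mk (i%:~R * a) (i%:~R * b) (i%:~R * c) 0.
Proof.
move=> ab0; elim/int_ind_succ_pred: i => [|i IH|i IH]; first by rewrite !mul0r.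
  rewrite gpowzS IH mk_mul rsign0 !intrD; congr mk; try ring.
  by case: ab0 => ->; ring.
rewrite gpowzP IH mk_inv mk_mul rsign0 !intrD !intrN; congr mk; try ring.
by case: ab0 => ->; ring.
Qed.

Lemma gpowz_T (e : int) : @gpowz model (mk 0 0 0 1) e = mk 0 0 0 e.
Proof.
elim/int_ind_succ_pred: e => [//|e IH|e IH].
  by rewrite gpowzS IH mk_mul; congr mk; ring.
by rewrite gpowzP IH mk_inv mk_mul; congr mk; ring.
Qed.

Lemma mk_nform a b c e :
  @gmul model (mk a 0 0 0) (@gmul model (mk 0 b 0 0) (@gmul model (mk 0 0 c 0) (mk 0 0 0 e)))
  = mk a b c e.
Proof. by rewrite !mk_mul rsign0; congr mk; ring. Qed.

Lemma comm_coords (p q : model) :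
  [/\ xco (comm p q) = (1 - rsign (tco q)) * xco p - (1 - rsign (tco p)) * xco q,
      yco (comm p q) = (1 - rsign (tco q)) * yco p - (1 - rsign (tco p)) * yco q &
      tco (comm p q) = 0].
Proof.
rewrite /comm /= ?rsignD ?rsignN; split; last by lia.
all: by case: (rsignE (tco p)) => ->; case: (rsignE (tco q)) => ->; ring.
Qed.

Lemma comm_XY a b : comm (mk a 0 0 0 : model) (mk 0 b 0 0) = mk 0 0 (a * b) 0.
Proof. by rewrite /comm !mk_inv !mk_mul ?rsignD ?rsignN rsign0; congr mk; ring. Qed.

Lemma comm_TX a : comm (mk 0 0 0 1 : model) (mk a 0 0 0) = mk (- (2 * a)) 0 0 0.
Proof. by rewrite /comm !mk_inv !mk_mul ?rsignD ?rsignN rsign0 rsign1; congr mk; ring. Qed.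

Lemma comm_YX a : comm (mk 0 1 0 0 : model) (mk a 0 0 0) = mk 0 0 (- a) 0.
Proof. by rewrite /comm !mk_inv !mk_mul ?rsignD ?rsignN rsign0; congr mk; ring. Qed.

Lemma mk_central c (p : model) : gmul (mk 0 0 c 0 : model) p = gmul p (mk 0 0 c 0).
Proof. by rewrite [p]mk_coords !mk_mul rsign0; congr mk; ring. Qed.

Lemma gconj_TX a : gconj (mk 0 0 0 1 : model) (mk a 0 0 0) = ginv (mk a 0 0 0 : model).
Proof. by rewrite /gconj !mk_inv !mk_mul ?rsignN rsign0 rsign1; congr mk; ring. Qed.

Lemma gconj_TY b : gconj (mk 0 0 0 1 : model) (mk 0 b 0 0) = ginv (mk 0 b 0 0 : model).
Proof. by rewrite /gconj !mk_inv !mk_mul ?rsignN rsign0 rsign1; congr mk; ring. Qed.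

Lemma model_gamma_rels (n : nat) a b : (n ^ 2)%:R * (a * b) = P ->
  gamma_rels n (mk a 0 0 0 : model) (mk 0 b 0 0) (mk 0 0 0 1).
Proof.
move=> abP; rewrite /gamma_rels comm_XY; split.
  rewrite -[gpown _ _]/(gpowz _ (n ^ 2)%N) gpowz_mk0; last by left.
  by rewrite !mulr0 -[RHS](mk_shift _ _ _ _ 1) -abP; congr mk; ring.
do 3!(split; first exact/comm1P/mk_central).
by split; [exact: gconj_TX | exact: gconj_TY].
Qed.

End Model.

Section IntegerModel.
Variable N : nat.

Definition modN (u : int) : int := (u %% (N : int))%Z.

Lemma modND u (k : int) : modN (u + k%:~R * (N : int)) = modN u.
Proof. by rewrite /modN intz addrC modzMDl. Qed.

Lemma modNE u : exists k : int, modN u = u + k%:~R * (N : int).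
Proof. by exists (- (u %/ N)%Z); rewrite intz /modN {2}(divz_eq u N); ring. Qed.

Definition modelZ := model modND modNE.
Definition mkZ : int -> int -> int -> int -> modelZ := mk modND modNE.

Lemma dvdz2_sign e : (2 %| 1 - rsign int e)%Z.
Proof. by case: (rsignE int e) => ->. Qed.

Lemma lcs_modelZ m (p : modelZ) : lcs modelZ m p ->
  [/\ (0 < m)%N -> tco p = 0, (2 ^+ m %| xco p)%Z & (2 ^+ m %| yco p)%Z].
Proof.
elim: m p => [|m IH] p; first by rewrite expr0 !dvdzE !dvd1n.
pose Q (p : modelZ) :=
  [/\ (0 < m.+1)%N -> tco p = 0, (2 ^+ m.+1 %| xco p)%Z & (2 ^+ m.+1 %| yco p)%Z].
move=> lp; apply: (lp Q).
  split; first by split; rewrite //= dvdz0.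
  split=> [a b [ta xa ya] [tb xb yb] | a [ta xa ya]]; rewrite /Q /=.
    by split; [rewrite ta ?tb | apply: rpredD; last apply: dvdz_mull ..].
  by split; [rewrite ta | rewrite rpredN; apply: dvdz_mull ..].
move=> _ [a [b [_ [lb ->]]]]; case: (IH b lb) => tb xb yb.
rewrite /Q; case: (comm_coords a b) => -> -> ->; split=> //.
all: case: (posnP m) => [-> | m_gt0];
  last by rewrite tb // subrr mul0r sub0r exprS rpredN dvdz_mul ?dvdz2_sign.
all: by rewrite expr1; apply: rpredB; apply: dvdz_mulr; apply: dvdz2_sign.
Qed.

(* (2^(m+1) a, 0, c, 0) = [t, x^(-2^m a)] [y, x^(-2^m c hN^m)], because
   hN = (N + 1)/2 satisfies (2 hN)^m = 1 mod N. *)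
Lemma lcs_modelZ_z (hN : nat) : (2 * hN = N.+1)%N -> forall m (a c : int),
  lcs modelZ m (mkZ (2 ^+ m * a) 0 c 0).
Proof.
move=> ehN; elim=> [//|m IH] a c.
set u := c * hN%:Z ^+ m.
have -> : mkZ (2 ^+ m.+1 * a) 0 c 0 =
    gmul (comm (mkZ 0 0 0 1) (mkZ (2 ^+ m * - a) 0 0 0))
         (comm (mkZ 0 1 0 0) (mkZ (2 ^+ m * - u) 0 0 0)).
  have [k Ek] : exists k : int, (N%:Z + 1) ^+ m = 1 + k * N%:Z.
    elim: (m) => [|i [k Ek]]; first by exists 0; rewrite expr0; ring.
    by exists (k * N%:Z + k + 1); rewrite exprS Ek; ring.
  rewrite /mkZ comm_TX comm_YX mk_mul rsign0 -(mk_shift _ _ _ _ _ _ (c * k)).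
  congr mk; first by rewrite exprS; ring.
  have -> : - (2 ^+ m * - u) = c * (2 * hN%:Z) ^+ m by rewrite /u exprMn; ring.
  have -> : 2 * hN%:Z = N%:Z + 1 by rewrite -[2]/(2%:Z) -PoszM ehN; lia.
  by rewrite Ek intz; ring.
by apply: lcsM; rewrite /=; apply: commg_in; last apply: IH.
Qed.

End IntegerModel.

Lemma dvdz_pow2_eq0 (a : int) : (forall m : nat, (2 ^+ m %| a)%Z) -> a = 0.
Proof.
move=> h; apply/eqP; apply: contraT => a0.
have := dvdn_leq _ (h `|a|%N); rewrite abszX absz_gt0 => /(_ a0).
by rewrite leqNgt ltn_expl.
Qed.

Section Gamma.
Variable n : nat.
Hypothesis n_odd : odd n.
Variables (G : group) (x y t : G).
Hypothesis pres : presents_gamma n x y t.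

Local Notation N := (n ^ 2)%N.
Local Notation z := (comm x y).
Local Notation nform := (nform x y t).

Lemma gamma_zN : gpowz z N = gone.
Proof. by case: pres => -[]. Qed.

Lemma gamma_nform_mul a b c e a' b' c' e' :
  gmul (nform a b c e) (nform a' b' c' e') =
  nform (a + signz e * a') (b + signz e * b') (c + c' - b * (signz e * a')) (e + e').
Proof.
case: pres => -[_ [/comm1P zt [/comm1P zx [/comm1P zy [tx ty]]]]] _.
exact: nform_mul.
Qed.

Lemma model_gammaZ : gamma_rels n (mkZ N 1 0 0 0) (mkZ N 0 1 0 0) (mkZ N 0 0 0 1).
Proof. by apply: model_gamma_rels; rewrite mulr1 natz. Qed.

Definition toZ : G -> modelZ N :=
  proj1_sig (constructive_indefinite_description _
    (proj2 pres _ _ _ _ model_gammaZ)).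

Lemma toZ_spec : [/\ is_hom toZ, toZ x = mkZ N 1 0 0 0, toZ y = mkZ N 0 1 0 0
  & toZ t = mkZ N 0 0 0 1].
Proof.
by case: (proj2_sig (constructive_indefinite_description _
  (proj2 pres _ _ _ _ model_gammaZ))).
Qed.

Definition ofZ (p : modelZ N) : G := nform (xco p) (yco p) (zco p) (tco p).

Lemma ofZ_mk a b c e : ofZ (mkZ N a b c e) = nform a b c e.
Proof. by rewrite /ofZ /mkZ /= /modN nform_modz //; apply: gamma_zN. Qed.

Lemma ofZ_hom : is_hom ofZ.
Proof.
move=> p q; rewrite /ofZ gamma_nform_mul /= /rsign !intz.
by rewrite /modN nform_modz //; apply: gamma_zN.
Qed.

Lemma toZK g : ofZ (toZ g) = g.
Proof.
case: (proj2 pres G x y t (proj1 pres)) => f0 [_ _ _ _ uniq].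
case: toZ_spec => hf fx fy ft.
rewrite (uniq (fun g => ofZ (toZ g))); first by rewrite -(uniq id).
- exact: hom_comp hf ofZ_hom.
- by rewrite fx ofZ_mk /nform gpowz1 /= !gmul1r.
- by rewrite fy ofZ_mk /nform gpowz1 /= !gmul1r gmul1.
- by rewrite ft ofZ_mk /nform gpowz1 /= !gmul1.
Qed.

Lemma gamma_nform g : exists a b c e, g = nform a b c e.
Proof. by rewrite -(toZK g); do 4!eexists. Qed.

Lemma gamma_z_central (j : int) w : gmul (gpowz z j) w = gmul w (gpowz z j).
Proof.
rewrite -(nform_z x y t) -ofZ_mk -[w]toZK -!ofZ_hom; congr ofZ.
exact: mk_central.
Qed.

Lemma gamma_lcs m g : (0 < m)%N -> lcs G m g ->
  exists a b c, [/\ g = nform a b c 0, (2 ^+ m %| a)%Z & (2 ^+ m %| b)%Z].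
Proof.
move=> m_gt0 lg; case: toZ_spec => hf _ _ _.
case: (lcs_modelZ (hom_lcs hf lg)) => /(_ m_gt0) t0 xa yb.
by exists (xco (toZ g)), (yco (toZ g)), (zco (toZ g)); rewrite -t0 -[LHS]toZK.
Qed.

Lemma gamma_lcs_omega g : lcs_omega G g <-> exists j : int, g = gpowz z j.
Proof.
split=> [lg | [j ->] m].
  case: toZ_spec => hf _ _ _.
  have lZ m := lcs_modelZ (hom_lcs hf (lg m)).
  have x0 : xco (toZ g) = 0 by apply: dvdz_pow2_eq0 => m; case: (lZ m).
  have y0 : yco (toZ g) = 0 by apply: dvdz_pow2_eq0 => m; case: (lZ m).
  have t0 : tco (toZ g) = 0 by case: (lZ 1%N) => /(_ isT).
  by exists (zco (toZ g)); rewrite -[LHS]toZK /ofZ x0 y0 t0 nform_z.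
have [hN ehN] : exists hN : nat, (2 * hN = N.+1)%N.
  exists N.+1./2; have := odd_double_half N.+1.
  by rewrite /= oddX n_odd orbT /= add0n => E; rewrite -[RHS]E; lia.
have := hom_lcs ofZ_hom (lcs_modelZ_z ehN m 0 j).
by rewrite ofZ_mk mulr0 nform_z.
Qed.

Lemma gamma_z_order (j : nat) : (0 < j < N)%N -> gpown z j <> gone.
Proof.
move=> /andP [j_gt0 jN] zj; case: toZ_spec => hf fx fy _.
have := hom_gpowz hf z j; rewrite [gpowz z j]/= zj (hom1 hf) (hom_comm hf) fx fy.
rewrite /mkZ comm_XY gpowz_mk0; last by left.
move=> /(congr1 (@zco _ (modN N))) /=; rewrite /modN mod0z mulr1 intz modz_nat modn_small //.
by move=> [j0]; rewrite -j0 in j_gt0.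
Qed.

End Gamma.


Lemma fracQD u (k : int) : fracQ (u + k%:~R * 1) = fracQ u.
Proof. by rewrite /fracQ mulr1 floorDrz ?intr_int // intrKfloor intrD; ring. Qed.

Lemma fracQE u : exists k : int, fracQ u = u + k%:~R * 1.
Proof. by exists (- Num.floor u); rewrite /fracQ mulr1 intrN. Qed.

Definition modelQ := model fracQD fracQE.
Definition mkQ : rat -> rat -> rat -> int -> modelQ := mk fracQD fracQE.

Lemma fracQ_ge0 q : 0 <= fracQ q.
Proof. by rewrite /fracQ subr_ge0 floor_le. Qed.

Lemma fracQ_lt1 q : fracQ q < 1.
Proof. by rewrite /fracQ; have := floorD1_gt q; rewrite intrD; lra. Qed.

Lemma fracQ_id q : 0 <= q -> q < 1 -> fracQ q = q.
Proof.
move=> q_ge0 q_lt1; rewrite /fracQ.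
suff -> : Num.floor q = 0 by rewrite subr0.
by apply/eqP; rewrite eq_le floor_le0 q_lt1 floor_ge0 q_ge0.
Qed.

Lemma denq_dvdz (q : rat) (j d : int) : d != 0 -> q = j%:~R / d%:~R -> (denq q %| d)%Z.
Proof.
move=> d0 qE.
have e : numq q * d = j * denq q.
  apply/eqP; rewrite -(eqr_int rat) !intrM numqE qE; apply/eqP.
  by field; rewrite intr_eq0.
have : (denq q %| numq q * d)%Z by rewrite e dvdz_mull.
by rewrite Gauss_dvdzr // coprimezE coprime_sym; apply: coprime_num_den.
Qed.

Lemma denq_fracQ q : (denq (fracQ q) %| denq q)%Z.
Proof.
apply: (@denq_dvdz _ (numq q - Num.floor q * denq q)); first exact: denq_neq0.
by rewrite /fracQ intrD intrN intrM numqE; field; rewrite intr_eq0 denq_neq0.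
Qed.

Lemma fracQ_divn_eq (M : nat) (k k' : int) : M != 0%N ->
  fracQ (k%:~R / M%:R) = fracQ (k'%:~R / M%:R) -> exists r : int, k = k' + r * M%:Z.
Proof.
move=> M0; rewrite /fracQ.
set u := Num.floor (k%:~R / M%:R : rat); set v := Num.floor (k'%:~R / M%:R : rat).
move=> E; exists (u - v).
apply/eqP; rewrite -(eqr_int rat) !intrD !intrM !intrB -pmulrn; apply/eqP.
have M0' : M%:R != 0 :> rat by rewrite pnatr_eq0.
have -> : (k%:~R : rat) = (k'%:~R / M%:R + u%:~R - v%:~R) * M%:R.
  by rewrite -[LHS](mulfVK M0'); congr (_ * _); move: E; lra.
by field.
Qed.

Lemma natr_odd_neq0 n : odd n -> n%:R != 0 :> rat.
Proof. by rewrite pnatr_eq0; case: n. Qed.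

Lemma dvdz_pow2_odd_ratio (a a' : int) (n n' m : nat) :
  odd n -> odd n' -> a%:~R / n%:R = a'%:~R / n'%:R :> rat ->
  (2 ^+ m %| a')%Z -> (2 ^+ m %| a)%Z.
Proof.
move=> on on' E dva'.
have e : a * n' = a' * n.
  apply/eqP; rewrite -(eqr_int rat) !intrM; apply/eqP.
  have n0 := natr_odd_neq0 on; have n0' := natr_odd_neq0 on'.
  transitivity ((a%:~R / n%:R) * n%:R * n'%:R : rat); first by field.
  by rewrite E; field.
have : (2 ^+ m %| a * n')%Z by rewrite e dvdz_mulr.
by rewrite Gauss_dvdzl // coprimezXl // coprimezE /= coprime2n.
Qed.


Section Colimit.
Unset Implicit Arguments.
Variables (Gam : nat -> group) (gx gy gt : forall n, Gam n)
  (phi : forall m n, Gam m -> Gam n) (C : group) (iota : forall n, Gam n -> C).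
Hypothesis pres : forall n, odd n -> presents_gamma n (gx n) (gy n) (gt n).
Hypothesis phiP : forall m n, odd m -> odd n -> (m %| n)%N ->
  [/\ is_hom (phi m n), phi m n (gt m) = gt n,
      phi m n (gx m) = gpown (gx n) (n %/ m) &
      phi m n (gy m) = gpown (gy n) (n %/ m)].
Hypothesis colim : is_colimit phi iota.
Set Implicit Arguments.

Local Notation zz n := (comm (gx n) (gy n)).

Lemma odd_mul n1 n2 : odd n1 -> odd n2 -> odd (n1 * n2).
Proof. by move=> o1 o2; rewrite oddM o1 o2. Qed.

Lemma iota_hom n : odd n -> is_hom (iota n).
Proof. by case: colim => h _; apply: h. Qed.

Lemma iota_liftl n1 n2 w : odd n1 -> odd n2 ->
  iota n1 w = iota (n1 * n2) (phi n1 (n1 * n2) w).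
Proof. by case: colim => _ [h _] o1 o2; rewrite h ?odd_mul ?dvdn_mulr. Qed.

Lemma iota_liftr n1 n2 w : odd n1 -> odd n2 ->
  iota n2 w = iota (n1 * n2) (phi n2 (n1 * n2) w).
Proof. by case: colim => _ [h _] o1 o2; rewrite h ?odd_mul ?dvdn_mull. Qed.

Lemma phi_homl n1 n2 : odd n1 -> odd n2 -> is_hom (phi n1 (n1 * n2)).
Proof. by move=> o1 o2; case: (phiP _ _ o1 (odd_mul o1 o2) (dvdn_mulr _ _)). Qed.

Lemma phi_homr n1 n2 : odd n1 -> odd n2 -> is_hom (phi n2 (n1 * n2)).
Proof. by move=> o1 o2; case: (phiP _ _ o2 (odd_mul o1 o2) (dvdn_mull _ _)). Qed.

Definition in_image (c : C) := exists n g, odd n /\ c = iota n g.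

Lemma in_image1 : in_image gone.
Proof. by exists 1%N, gone; rewrite (hom1 (iota_hom _)). Qed.

Lemma in_imageM a b : in_image a -> in_image b -> in_image (gmul a b).
Proof.
move=> [n1 [g1 [o1 ->]]] [n2 [g2 [o2 ->]]].
exists (n1 * n2)%N, (gmul (phi n1 (n1 * n2) g1) (phi n2 (n1 * n2) g2)).
by rewrite odd_mul // (iota_hom (odd_mul o1 o2)) -iota_liftl // -iota_liftr.
Qed.

Lemma in_imageV a : in_image a -> in_image (ginv a).
Proof. by move=> [n1 [g1 [o1 ->]]]; exists n1, (ginv g1); rewrite (homV (iota_hom o1)). Qed.

Definition image_elt := {c : C | in_image c}.

Lemma image_elt_ext (p q : image_elt) : proj1_sig p = proj1_sig q -> p = q.
Proof.
by case: p => a pa; case: q => b pb /= e; subst b; congr exist; apply: proof_irrelevance.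
Qed.

Definition image_mul (p q : image_elt) : image_elt :=
  exist _ _ (in_imageM (proj2_sig p) (proj2_sig q)).
Definition image_inv (p : image_elt) : image_elt := exist _ _ (in_imageV (proj2_sig p)).
Definition image_one : image_elt := exist _ _ in_image1.

Lemma image_mulA p q r : image_mul p (image_mul q r) = image_mul (image_mul p q) r.
Proof. by apply: image_elt_ext; rewrite /= gmulA. Qed.

Lemma image_mul1 p : image_mul image_one p = p.
Proof. by apply: image_elt_ext; rewrite /= gmul1. Qed.

Lemma image_mulV p : image_mul (image_inv p) p = image_one.
Proof. by apply: image_elt_ext; rewrite /= gmulV. Qed.

Definition image_group :=
  @Defs.Group image_elt image_mul image_inv image_one image_mulA image_mul1 image_mulV.

Definition to_image n (g : Gam n) : image_group :=
  match odd n =P true with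
  | ReflectT on => exist _ (iota n g) (ex_intro _ n (ex_intro _ g (conj on erefl)))
  | ReflectF _ => image_one
  end.

Lemma to_imageE n (g : Gam n) : odd n -> proj1_sig (to_image g) = iota n g.
Proof. by rewrite /to_image; case: (odd n =P true). Qed.

(* The iota_n factor through the subgroup image_group; by uniqueness in the
   universal property, the inclusion composed with this factorization is the
   identity of C. *)
Lemma colimit_in_image c : in_image c.
Proof.
case: colim => iota_h [iota_c univ].
have to_image_hom n : odd n -> is_hom (@to_image n).
  by move=> on a b; apply: image_elt_ext; rewrite /= !to_imageE // (iota_hom on).
have to_image_compat m n : odd m -> odd n -> (m %| n)%N ->
    forall g, to_image (phi m n g) = to_image g.
  by move=> om on mn g; apply: image_elt_ext; rewrite !to_imageE //; case: colim => _ [->].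
case: (univ image_group to_image to_image_hom to_image_compat) => h [h_hom h_iota _].
case: (univ C iota iota_h iota_c) => h0 [_ _ uniq].
have c_id : c = h0 c by apply: (uniq (fun c => c)).
have c_h : proj1_sig (h c) = h0 c.
  apply: (uniq (fun c => proj1_sig (h c))) => [a b | n on g]; first by rewrite h_hom.
  by rewrite h_iota // to_imageE.
by rewrite c_id -c_h; apply: proj2_sig (h c).
Qed.

Lemma colimit_lcs m c : lcs C m c ->
  exists n w, [/\ odd n, lcs (Gam n) m w & c = iota n w].
Proof.
elim: m c => [|m IH] c.
  by move=> _; case: (colimit_in_image c) => n [g [on ->]]; exists n, g.
pose Q c := exists n w, [/\ odd n, lcs (Gam n) m.+1 w & c = iota n w].
move=> lc; apply: (lc Q).
  split; first by exists 1%N, gone; rewrite (hom1 (iota_hom _)) //; case: (lcs_subgroup (Gam 1) m.+1).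
  split=> [a b [n1 [w1 [o1 l1 ->]]] [n2 [w2 [o2 l2 ->]]] | a [n1 [w1 [o1 l1 ->]]]].
    exists (n1 * n2)%N, (gmul (phi n1 (n1 * n2) w1) (phi n2 (n1 * n2) w2)).
    rewrite odd_mul // (iota_hom (odd_mul o1 o2)) -iota_liftl // -iota_liftr //.
    by split=> //; apply: lcsM; apply: hom_lcs; [apply: phi_homl | | apply: phi_homr |].
  by exists n1, (ginv w1); rewrite (homV (iota_hom o1)); split=> //; apply: lcsV.
move=> _ [a [b [_ [lb ->]]]].
case: (colimit_in_image a) => n1 [w1 [o1 ->]].
case: (IH b lb) => n2 [w2 [o2 l2 ->]].
exists (n1 * n2)%N, (comm (phi n1 (n1 * n2) w1) (phi n2 (n1 * n2) w2)); split.
- exact: odd_mul.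
- by apply: commg_in => //; apply: hom_lcs l2; apply: phi_homr.
- by rewrite (hom_comm (iota_hom (odd_mul o1 o2))) -iota_liftl // -iota_liftr.
Qed.

Definition Xq (n : nat) : modelQ := mkQ (1 / n%:R) 0 0 0.
Definition Yq (n : nat) : modelQ := mkQ 0 (1 / n%:R) 0 0.
Definition Tq : modelQ := mkQ 0 0 0 1.

Lemma model_gammaQ n : odd n -> gamma_rels n (Xq n) (Yq n) Tq.
Proof.
move=> on; apply: model_gamma_rels; rewrite natrX.
by field; apply: natr_odd_neq0.
Qed.

Definition to_modelQ_spec n (f : Gam n -> modelQ) := odd n ->
  [/\ is_hom f, f (gx n) = Xq n, f (gy n) = Yq n, f (gt n) = Tq &
      forall f' : Gam n -> modelQ, is_hom f' -> f' (gx n) = Xq n -> f' (gy n) = Yq n ->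
        f' (gt n) = Tq -> forall g, f' g = f g].

Lemma to_modelQ_ex n : exists f, @to_modelQ_spec n f.
Proof.
case on: (odd n); last by exists (fun _ => gone); rewrite /to_modelQ_spec on.
by case: (proj2 (pres n on) _ _ _ _ (model_gammaQ on)) => f hf; exists f.
Qed.

Definition to_modelQ n : Gam n -> modelQ :=
  proj1_sig (constructive_indefinite_description _ (to_modelQ_ex n)).
Arguments to_modelQ : clear implicits.

Lemma to_modelQP n : to_modelQ_spec (to_modelQ n).
Proof. exact: proj2_sig (constructive_indefinite_description _ (to_modelQ_ex n)). Qed.

Lemma to_modelQ_hom n : odd n -> is_hom (to_modelQ n).
Proof. by move=> on; case: (to_modelQP on). Qed.

Lemma to_modelQ_phi m n : odd m -> odd n -> (m %| n)%N ->
  forall g, to_modelQ n (phi m n g) = to_modelQ m g.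
Proof.
move=> om on mn g.
case: (phiP _ _ om on mn) => phi_h phi_t phi_x phi_y.
case: (to_modelQP on) => fn_h fn_x fn_y fn_t _.
case: (to_modelQP om) => _ _ _ _ uniq.
have m0 := natr_odd_neq0 om; have n0 := natr_odd_neq0 on.
have en : n%:R = (n %/ m)%:R * m%:R :> rat by rewrite -natrM divnK.
have nm0 : (n %/ m)%:R != 0 :> rat by move: n0; rewrite en mulf_eq0 negb_or => /andP [].
apply: (uniq (fun g => to_modelQ n (phi m n g))).
- exact: hom_comp phi_h fn_h.
- rewrite phi_x -[gpown _ _]/(gpowz _ (n %/ m)%N) (hom_gpowz fn_h) fn_x /Xq /mkQ.
  rewrite gpowz_mk0 ?mulr0; last by right.
  by congr mk; rewrite -pmulrn en; field; apply/andP.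
- rewrite phi_y -[gpown _ _]/(gpowz _ (n %/ m)%N) (hom_gpowz fn_h) fn_y /Yq /mkQ.
  rewrite gpowz_mk0 ?mulr0; last by left.
  by congr mk; rewrite -pmulrn en; field; apply/andP.
- by rewrite phi_t fn_t.
Qed.

Definition colimQ : C -> modelQ :=
  proj1_sig (constructive_indefinite_description _
    (proj2 (proj2 colim) modelQ to_modelQ to_modelQ_hom to_modelQ_phi)).

Lemma colimQP : is_hom colimQ /\ forall n, odd n -> forall g, colimQ (iota n g) = to_modelQ n g.
Proof.
by case: (proj2_sig (constructive_indefinite_description _
  (proj2 (proj2 colim) modelQ to_modelQ to_modelQ_hom to_modelQ_phi))).
Qed.

Lemma colimQ_nform n a b c e : odd n ->
  colimQ (iota n (nform (gx n) (gy n) (gt n) a b c e)) =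
  mkQ (a%:~R / n%:R) (b%:~R / n%:R) (c%:~R / (n ^ 2)%:R) e.
Proof.
move=> on; case: colimQP => _ ->//; case: (to_modelQP on) => hf fx fy ft _.
rewrite /nform !hf !(hom_gpowz hf) (hom_comm hf) fx fy ft /Xq /Yq /Tq /mkQ comm_XY.
rewrite !gpowz_mk0 ?gpowz_T ?mulr0 ?mk_nform; try by [left | right].
by congr mk; rewrite ?natrX; field; apply: natr_odd_neq0.
Qed.

Lemma colimit_omega_z n (j : int) : odd n -> lcs_omega C (iota n (gpowz (zz n) j)).
Proof.
move=> on; apply: hom_lcs_omega; first exact: iota_hom.
by apply/(gamma_lcs_omega on (pres n on)); exists j.
Qed.

Lemma colimit_omega c :
  lcs_omega C c -> exists n (j : int), odd n /\ c = iota n (gpowz (zz n) j).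
Proof.
move=> lc; case: (colimit_in_image c) => n [g [on ec]].
case: (gamma_nform (pres n on) g) => a [b [k [e eg]]].
have Ec : colimQ c = mkQ (a%:~R / n%:R) (b%:~R / n%:R) (k%:~R / (n ^ 2)%:R) e.
  by rewrite ec eg colimQ_nform.
have deep m : (0 < m)%N -> [/\ e = 0, (2 ^+ m %| a)%Z & (2 ^+ m %| b)%Z].
  move=> m_gt0; case: (colimit_lcs (lc m)) => n' [w [on' lw ew]].
  case: (gamma_lcs (pres n' on') m_gt0 lw) => a' [b' [k' [ew' da' db']]].
  move: Ec; rewrite ew ew' colimQ_nform // => E.
  split; first by move/(congr1 (@tco _ _)): E.
    by apply: (dvdz_pow2_odd_ratio on on' _ da'); move/(congr1 (@xco _ _)): E.
  by apply: (dvdz_pow2_odd_ratio on on' _ db'); move/(congr1 (@yco _ _)): E.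
have deep0 u : (forall m, (0 < m)%N -> (2 ^+ m %| u)%Z) -> u = 0.
  by move=> h; apply: dvdz_pow2_eq0 => -[|m]; [rewrite expr0 dvdzE dvd1n | apply: h].
have a0 : a = 0 by apply: deep0 => m /deep [].
have b0 : b = 0 by apply: deep0 => m /deep [].
have [e0 _ _] := deep 1%N isT.
by exists n, k; rewrite ec eg a0 b0 e0 nform_z.
Qed.

Lemma colimit_omega_lift n n' (j : int) : odd n -> odd n' ->
  exists k : int, iota n (gpowz (zz n) j) = iota (n * n') (gpowz (zz (n * n')) k).
Proof.
move=> on on'; have onn' := odd_mul on on'.
have : lcs_omega (Gam (n * n')) (phi n (n * n') (gpowz (zz n) j)).
  apply: hom_lcs_omega; first exact: phi_homl.
  by apply/(gamma_lcs_omega on (pres n on)); exists j.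
by case/(gamma_lcs_omega onn' (pres _ onn')) => k Ek; exists k; rewrite -Ek -iota_liftl.
Qed.

Lemma colimit_omega_central g h : lcs_omega C g -> gmul g h = gmul h g.
Proof.
case/colimit_omega => n [j [on ->]].
case: (colimit_in_image h) => m [w [om ->]].
have onm := odd_mul on om.
case: (colimit_omega_lift j on om) => k ->.
rewrite (iota_liftr _ on om) -!(iota_hom onm); congr iota.
exact: gamma_z_central (pres _ onm) k _.
Qed.

Definition theta (c : C) : rat := zco (colimQ c).

Lemma theta_z n (j : int) : odd n ->
  theta (iota n (gpowz (zz n) j)) = fracQ (j%:~R / (n ^ 2)%:R).
Proof. by move=> on; rewrite /theta -(nform_z _ _ (gt n)) colimQ_nform. Qed.

Lemma colimQ_omega c : lcs_omega C c -> colimQ c = mkQ 0 0 (theta c) 0.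
Proof.
case/colimit_omega => n [j [on ->]]; rewrite theta_z // /mkQ mk_red.
by rewrite -(nform_z _ _ (gt n)) colimQ_nform // !mul0r.
Qed.

Lemma theta_Z2modZ c : lcs_omega C c -> in_Z2modZ (theta c).
Proof.
case/colimit_omega => n [j [on ->]]; rewrite theta_z //.
split; [exact: fracQ_ge0 | split; first exact: fracQ_lt1].
have nn0 : (n ^ 2)%N%:Z != 0 by rewrite -lt0n expn_gt0 orbC odd_gt0.
have d2 : (denq (j%:~R / (n ^ 2)%:R) %| (n ^ 2)%N%:Z)%Z.
  by apply: (denq_dvdz (j := j)).
have := dvdz_trans (denq_fracQ _) d2; rewrite dvdzE /= => d_dvd.
by apply: dvdn_odd d_dvd _; rewrite oddX on orbT.
Qed.

Lemma theta_surj q : in_Z2modZ q -> exists g, lcs_omega C g /\ theta g = q.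
Proof.
move=> [q_ge0 [q_lt1 odd_d]]; set d := `|denq q|%N.
exists (iota d (gpowz (zz d) (numq q * d%:Z))); split; first exact: colimit_omega_z.
rewrite theta_z // -[RHS](fracQ_id q_ge0 q_lt1); congr fracQ.
have ed : d%:R = (denq q)%:~R :> rat by rewrite -[d%:R]/(d%:Z%:~R) /d absz_denq.
rewrite intrM -pmulrn natrX ed -[in RHS](divq_num_den q).
by field; rewrite intr_eq0 denq_neq0.
Qed.

Lemma theta_inj g h : lcs_omega C g -> lcs_omega C h -> theta g = theta h -> g = h.
Proof.
case/colimit_omega => n [j [on ->]]; case/colimit_omega => n' [j' [on' ->]].
have onn' := odd_mul on on'.
case: (colimit_omega_lift j on on') => k ->.
case: (colimit_omega_lift j' on' on) => k' ->; rewrite [(n' * n)%N]mulnC.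
have NN0 : ((n * n') ^ 2)%N != 0%N by rewrite -lt0n expn_gt0 odd_gt0 ?orbT.
rewrite !theta_z // => /(fracQ_divn_eq NN0) [r ->].
by rewrite gpowzD mulrC gpowzM (gamma_zN (pres _ onn')) gpowz1g gmul1r.
Qed.

Lemma theta_add g h : lcs_omega C g -> lcs_omega C h ->
  theta (gmul g h) = fracQ (theta g + theta h).
Proof.
move=> lg lh; rewrite {1}/theta (proj1 colimQP) (colimQ_omega lg) (colimQ_omega lh).
by rewrite /mkQ mk_mul /=; congr fracQ; ring.
Qed.


End Colimit.

Local Close Scope ring_scope.

Theorem lemma3p3 :
  (* Part 1: each Gamma_{2k-1} *)
  (forall (k : nat) (G : group) (x y t : G),
     (0 < k)%N -> presents_gamma (2 * k - 1) x y t ->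
     let n := (2 * k - 1)%N in
     let z := comm x y in
     [/\ (forall g : G, lcs_omega G g <-> exists j : int, g = gpowz z j),
         gpown z (n ^ 2) = gone,
         (forall j : nat, (0 < j < n ^ 2)%N -> gpown z j <> gone)
       & (forall g : G, lcs_omega1 G g <-> g = gone)]) /\
  (* Part 2: the colimit hat Gamma *)
  (forall (Gam : nat -> group) (gx gy gt : forall n, Gam n)
          (phi : forall m n, Gam m -> Gam n) (C : group) (iota : forall n, Gam n -> C),
     (forall n, odd n -> presents_gamma n (gx n) (gy n) (gt n)) ->
     (forall m n, odd m -> odd n -> (m %| n)%N ->
        [/\ is_hom (phi m n), phi m n (gt m) = gt n,
            phi m n (gx m) = gpown (gx n) (n %/ m) &
            phi m n (gy m) = gpown (gy n) (n %/ m)]) ->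
     is_colimit phi iota ->
     let zz := fun n => comm (gx n) (gy n) in
     [/\ (forall g : C, lcs_omega C g <->
            exists (n : nat) (j : int), odd n /\ g = iota n (gpowz (zz n) j)),
         (forall g h : C, lcs_omega C g -> gmul g h = gmul h g),
         (exists theta : C -> rat,
            [/\ forall g, lcs_omega C g -> in_Z2modZ (theta g),
                forall q, in_Z2modZ q -> exists g, lcs_omega C g /\ theta g = q,
                forall g h, lcs_omega C g -> lcs_omega C h -> theta g = theta h -> g = h,
                forall g h, lcs_omega C g -> lcs_omega C h ->
                  theta (gmul g h) = fracQ (theta g + theta h)%R
              & forall n, odd n -> theta (iota n (zz n)) = fracQ (1 / (n ^ 2)%:R)%R])
       & (forall g : C, lcs_omega1 C g <-> g = gone)]).
Proof.
split.
- move=> k G x y t k_gt0 pres n z; rewrite {}/z {}/n.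
  have n_odd : odd (2 * k - 1) by rewrite (_ : 2 * k - 1 = (2 * k.-1).+1); [rewrite /= oddM | lia].
  split; [move=> g; exact: (gamma_lcs_omega n_odd pres g) | exact: gamma_zN pres
         | exact: gamma_z_order pres |].
  apply: lcs_omega_central_trivial => g h /(gamma_lcs_omega n_odd pres) [j ->].
  exact: gamma_z_central pres j h.
- move=> Gam gx gy gt phi C iota pres phiP colim zz; rewrite {}/zz /=.
  have central := colimit_omega_central pres phiP colim.
  split=> //; last by move=> g; apply: (lcs_omega_central_trivial central g).
  + move=> g; split; first exact: (colimit_omega pres phiP colim).
    by case=> n [j [on ->]]; apply: (colimit_omega_z pres colim j on).
  + exists (theta pres phiP colim); split.
    * exact: (theta_Z2modZ pres phiP colim).
    * exact: (theta_surj pres phiP colim).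
    * exact: theta_inj.
    * exact: (theta_add pres phiP colim).
    * by move=> n on; rewrite -(gpowz1 (comm (gx n) (gy n))) (theta_z pres phiP colim).
Qed.
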